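(* Let $\mathcal{H}_A$ and $\mathcal{H}_B$ be $d$-dimensional Hilbert spaces. Let $\{\ket{k}\}_{k=1}^d$ be an orthonormal basis of each space, and fix a unit vector $\ket{b}\in\mathcal{H}_B$. Let $U$ be a unitary on $\mathcal{H}_A\otimes\mathcal{H}_B$ with $U(\ket{k}\otimes\ket{b})=\ket{k}\otimes\ket{k}$ for all $k$. Then $(U,\ket{b})$ masks the family of states $$\ket{a_\phi}=\tfrac{1}{\sqrt d}\sum_{k=1}^d e^{i\phi_k}\ket{k},\qquad \phi=(\phi_1,\dots,\phi_d)\in[-\pi,\pi]^d.$$ That is, for every such $\ket{a_\phi}$, both marginals of $U(\ket{a_\phi}\otimes\ket{b})$ equal the same state $I/d$, independent of $\phi$. More generally, for every density operator $\sigma$ on $\mathcal{H}_A$ that is a convex combination of the projectors $\ket{a_\phi}\bra{a_\phi}$, both marginals of $U(\sigma\otimes\ket{b}\bra{b})U^\dagger$ equal $I/d$.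
   Context: A masker for a set of states on $\mathcal{H}_A$ is a unitary $U$ on $\mathcal{H}_A\otimes\mathcal{H}_B$ together with a fixed ancilla state $\ket{b}\in\mathcal{H}_B$. It masks the set if, for every state in the set, the reduced states on $A$ and on $B$ of the output $U(\cdot\otimes\ket{b})$ do not depend on which state of the set was input. The convex hull of the states $\ket{a_\phi}$ is called the great hyper-disk. A unitary with the stated action exists, since the vectors $\ket{k}\otimes\ket{k}$ are orthonormal. *)

From HB Require Import structures.
From mathcomp Require Import all_boot all_order all_algebra.
From mathcomp Require Import complex mxtens.
From mathcomp Require Import reals trigo.
Set Implicit Arguments.
Unset Strict Implicit.
Unset Printing Implicit Defensive.
Import Order.TTheory GRing.Theory Num.Theory.
Local Open Scope ring_scope.
Local Open Scope complex_scope.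

Section Defs.
Variable R : realType.
Local Notation C := (R[i]).

Definition expi (x : R) : C := (cos x)%:C + 'i * (sin x)%:C.

(* conjugate transpose (ket -> bra, U -> U^dagger) *)
Definition adj {m n} (M : 'M[C]_(m, n)) : 'M[C]_(n, m) := map_mx conjc (M^T).

Definition ket {d} (k : 'I_d) : 'cV[C]_d := delta_mx k 0.

Definition a_phi {d} (phi : 'I_d -> R) : 'cV[C]_d :=
  ((Num.sqrt (d%:R : R))^-1)%:C *: \sum_(k < d) expi (phi k) *: ket k.

Definition phase_ok {d} (phi : 'I_d -> R) : Prop :=
  forall k, - pi <= phi k <= pi.

Definition in_hyperdisk {d} (sigma : 'M[C]_d) : Prop :=
  exists (n : nat) (w : 'I_n -> R) (ph : 'I_n -> 'I_d -> R),
    (forall j, 0 <= w j) /\ \sum_(j < n) w j = 1 /\ (forall j, phase_ok (ph j)) /\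
    sigma = \sum_(j < n) (w j)%:C *: (a_phi (ph j) *m adj (a_phi (ph j))).

(* partial traces on H_A (x) H_B = C^d (x) C^d, index convention of tensmx *)
Definition ptraceB {d} (rho : 'M[C]_(d * d)) : 'M[C]_d :=
  \matrix_(i, j) \sum_(k < d) rho (mxtens_index (i, k)) (mxtens_index (j, k)).
Definition ptraceA {d} (rho : 'M[C]_(d * d)) : 'M[C]_d :=
  \matrix_(i, j) \sum_(k < d) rho (mxtens_index (k, i)) (mxtens_index (k, j)).

Definition maxmixed (d : nat) : 'M[C]_d := ((d%:R : C)^-1) *: 1%:M.
End Defs.
Arguments expi {R}.
Arguments adj {R m n}.
Arguments ket {R d}.
Arguments a_phi {R d}.
Arguments phase_ok {R d}.
Arguments in_hyperdisk {R d}.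
Arguments ptraceA {R d}.
Arguments ptraceB {R d}.

(** The hypothesis on U fixes the output on the whole hyper-disk:
    U (|a_phi> (x) |b>) = d^{-1/2} sum_k e^{i phi_k} |k>|k>, a vector supported
    on the diagonal |k>|k> whose coefficients all have squared modulus 1/d.
    For any such vector v, both partial traces of |v><v| are the diagonal
    matrix of these squared moduli, i.e. I/d.  For mixed states,
    U (|a><a| (x) |b><b|) U^dagger is the projector on U (|a> (x) |b>), and the
    partial traces are linear, so a convex combination of states with marginals
    I/d again has marginals I/d.  Neither the normalisation of |b>, nor the
    unitarity of U, nor the range of the phases plays any role. *)
From HB Require Import structures.
From mathcomp Require Import all_boot all_order all_algebra.
From mathcomp Require Import complex mxtens spectral.
From mathcomp Require Import reals trigo.
Set Implicit Arguments.
Unset Strict Implicit.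
Unset Printing Implicit Defensive.
Import Order.TTheory GRing.Theory Num.Theory.
Local Open Scope ring_scope.
Local Open Scope complex_scope.

Lemma linear_affine_comb_const (K : pzRingType) (V W : lmodType K)
    (f : {linear V -> W}) n (w : 'I_n -> K) (v : 'I_n -> V) (x : W) :
  \sum_(j < n) w j = 1 -> (forall j, f (v j) = x) ->
  f (\sum_(j < n) w j *: v j) = x.
Proof.
move=> w1 fv; rewrite linear_sum.
under eq_bigr do rewrite linearZ fv.
by rewrite -scaler_suml w1 scale1r.
Qed.

Lemma tensmx_suml (K : pzRingType) I (r : seq I) (P : pred I) m n p q
    (A : I -> 'M[K]_(m, n)) (B : 'M[K]_(p, q)) :
  (\sum_(k <- r | P k) A k) *t B = \sum_(k <- r | P k) (A k *t B).
Proof.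
apply/matrixP=> i j; rewrite !mxE !summxE mulr_suml.
by apply: eq_bigr => k _; rewrite !mxE.
Qed.

Lemma tensmxZl (K : pzRingType) m n p q (c : K) (A : 'M[K]_(m, n)) (B : 'M[K]_(p, q)) :
  (c *: A) *t B = c *: (A *t B).
Proof. by apply/matrixP=> i j; rewrite !mxE mulrA. Qed.

Section MaskingHyperdisk.
Variable R : realType.
Local Notation C := R[i].

Lemma expi_mulJ (x : R) : expi x * (expi x)^* = 1.
Proof.
apply/eqP; rewrite eq_complex /=.
rewrite !(mul0r, mulr0, mul1r, subr0, add0r, addr0, mulrN, mulNr, opprK, oppr0).
rewrite -!expr2 cos2Dsin2 eqxx /=.
by rewrite mulrC addrC subrr.
Qed.

Lemma adj_mulmx m n p (A : 'M[C]_(m, n)) (B : 'M[C]_(n, p)) :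
  adj (A *m B) = adj B *m adj A.
Proof.
apply/matrixP=> i j; rewrite !mxE rmorph_sum; apply: eq_bigr => k _.
by rewrite !mxE rmorphM mulrC.
Qed.

Lemma adj_tensmx m n p q (A : 'M[C]_(m, n)) (B : 'M[C]_(p, q)) :
  adj (A *t B) = adj A *t adj B.
Proof. by apply/matrixP=> i j; rewrite !mxE rmorphM. Qed.

Lemma tensmx_proj m n (U : 'M[C]_(m * n)) (a : 'cV[C]_m) (b : 'cV[C]_n) :
  U *m ((a *m adj a) *t (b *m adj b)) *m adj U
  = (U *m (a *t b)) *m adj (U *m (a *t b)).
Proof. by rewrite -tensmx_mul -adj_tensmx adj_mulmx !mulmxA. Qed.

Section PartialTraceLinear.
Variable d : nat.

Fact ptraceA_is_linear : linear (@ptraceA R d).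
Proof.
move=> c M N; apply/matrixP=> i j; rewrite !mxE mulr_sumr -big_split.
by apply: eq_bigr => k _; rewrite !mxE.
Qed.

Fact ptraceB_is_linear : linear (@ptraceB R d).
Proof.
move=> c M N; apply/matrixP=> i j; rewrite !mxE mulr_sumr -big_split.
by apply: eq_bigr => k _; rewrite !mxE.
Qed.

HB.instance Definition _ :=
  GRing.isLinear.Build C 'M[C]_(d * d) 'M[C]_d _ (@ptraceA R d) ptraceA_is_linear.
HB.instance Definition _ :=
  GRing.isLinear.Build C 'M[C]_(d * d) 'M[C]_d _ (@ptraceB R d) ptraceB_is_linear.

End PartialTraceLinear.

Definition diagket {d} (c : 'I_d -> C) : 'cV[C]_(d * d) :=
  \sum_(k < d) c k *: (ket k *t ket k).

Lemma diagketE d (c : 'I_d -> C) (m i : 'I_d) :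
  diagket c (mxtens_index (m, i)) 0 = c m * (m == i)%:R.
Proof.
rewrite summxE (bigD1 m) //= big1 ?addr0 => [|k km].
  by rewrite !mxE mxtens_indexK /= !(ord1 (Ordinal _)) eqxx !andbT mul1r eq_sym.
by rewrite !mxE mxtens_indexK /= [m == k]eq_sym (negbTE km) mul0r mulr0.
Qed.

Lemma mulmx_adj_cVE n (v : 'cV[C]_n) p q : (v *m adj v) p q = v p 0 * (v q 0)^*.
Proof. by rewrite mxE big_ord1 !mxE. Qed.

Lemma ptraceA_diagket d (c : 'I_d -> C) :
  ptraceA (diagket c *m adj (diagket c)) = diag_mx (\row_k (c k * (c k)^*)).
Proof.
apply/matrixP=> i j; rewrite !mxE.
under eq_bigr do rewrite mulmx_adj_cVE !diagketE.
rewrite (bigD1 i) //= big1 ?addr0 => [|k /negbTE ->]; last by rewrite mulr0 mul0r.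
by rewrite eqxx; case: eqP => _; rewrite ?mulr1 ?mulr0 ?rmorph0 ?mulr0.
Qed.

Lemma ptraceB_diagket d (c : 'I_d -> C) :
  ptraceB (diagket c *m adj (diagket c)) = diag_mx (\row_k (c k * (c k)^*)).
Proof.
apply/matrixP=> i j; rewrite !mxE.
under eq_bigr do rewrite mulmx_adj_cVE !diagketE.
rewrite (bigD1 i) //= big1 ?addr0 => [|k ki]; last first.
  by rewrite eq_sym (negbTE ki) mulr0 mul0r.
by rewrite eqxx [j == i]eq_sym; case: eqP => [<-|_]; rewrite ?mulr1 ?mulr0 ?rmorph0 ?mulr0.
Qed.

Lemma ptrace_diagket_uniform d (c : 'I_d -> C) :
  (forall k, c k * (c k)^* = d%:R^-1) ->
  ptraceA (diagket c *m adj (diagket c)) = maxmixed R d /\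
  ptraceB (diagket c *m adj (diagket c)) = maxmixed R d.
Proof.
move=> c_unif; have diag_c : diag_mx (\row_k (c k * (c k)^*)) = maxmixed R d.
  rewrite /maxmixed scalemx1 -diag_const_mx; congr diag_mx.
  by apply/rowP => k; rewrite !mxE c_unif.
by rewrite ptraceA_diagket ptraceB_diagket diag_c.
Qed.

Lemma invsqrt_expi_mulJ (n : nat) (x : R) :
  let c := ((Num.sqrt (n%:R : R))^-1)%:C * expi x in c * c^* = n%:R^-1.
Proof.
rewrite /= rmorphM mulrACA expi_mulJ mulr1 [X in _ * X](conjc_real _).
rewrite -rmorphM -invfM -expr2.
by rewrite sqr_sqrtr ?ler0n // fmorphV rmorph_nat.
Qed.

Lemma masker_a_phiE d (b : 'cV[C]_d) (U : 'M[C]_(d * d)) (phi : 'I_d -> R) :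
  (forall k, U *m (ket k *t b) = ket k *t ket k) ->
  U *m (a_phi phi *t b)
  = diagket (fun k => ((Num.sqrt (d%:R : R))^-1)%:C * expi (phi k)).
Proof.
move=> hU; rewrite /a_phi tensmxZl tensmx_suml -scalemxAr mulmx_sumr.
rewrite /diagket scaler_sumr; apply: eq_bigr => k _.
by rewrite tensmxZl -scalemxAr hU scalerA.
Qed.

Lemma tensmx_mixture_conj m n (U : 'M[C]_(m * n)) k (w : 'I_k -> C)
    (a : 'I_k -> 'cV[C]_m) (b : 'cV[C]_n) :
  U *m ((\sum_(j < k) w j *: (a j *m adj (a j))) *t (b *m adj b)) *m adj U
  = \sum_(j < k) w j *: ((U *m (a j *t b)) *m adj (U *m (a j *t b))).
Proof.
rewrite tensmx_suml mulmx_sumr mulmx_suml; apply: eq_bigr => j _.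
by rewrite tensmxZl -scalemxAr -scalemxAl tensmx_proj.
Qed.

End MaskingHyperdisk.

Theorem theorem4 (R : realType) (d : nat) (b : 'cV[R[i]]_d) (U : 'M[R[i]]_(d * d)) :
  adj b *m b = 1%:M ->
  U \is unitarymx ->
  (forall k : 'I_d, U *m (ket k *t b) = ket k *t ket k) ->
  (forall phi : 'I_d -> R, phase_ok phi ->
     let out := U *m (a_phi phi *t b) in
     ptraceA (out *m adj out) = maxmixed R d /\
     ptraceB (out *m adj out) = maxmixed R d) /\
  (forall sigma : 'M[R[i]]_d, in_hyperdisk sigma ->
     let out := U *m (sigma *t (b *m adj b)) *m adj U in
     ptraceA out = maxmixed R d /\ ptraceB out = maxmixed R d).
Proof.
move=> _ _ hU.
have pure phi : let out := U *m (a_phi phi *t b) in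
    ptraceA (out *m adj out) = maxmixed R d /\
    ptraceB (out *m adj out) = maxmixed R d.
  rewrite /= (masker_a_phiE phi hU).
  by apply: ptrace_diagket_uniform => k; apply: invsqrt_expi_mulJ.
split=> [phi _|sigma [n [w [ph [_ [w1 [_ ->]]]]]]]; first exact: pure.
rewrite /= tensmx_mixture_conj.
have w1C : \sum_(j < n) (w j)%:C = 1 :> R[i] by rewrite -rmorph_sum w1.
by split; apply: linear_affine_comb_const => // j; have [] := pure (ph j).
Qed.
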